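(* For $n\ge 9$, $t(K(n,3)) =\frac{n}{3}-1$. Moreover, if $S$ is a vertex cut of $K(n,3)$ such that $\frac{|S|}{c(K(n,3)\setminus S)} = \frac{n}{3}-1$, then $S$ is the complement of a maximum independent set of $K(n,3)$.
   Context: The Kneser graph $K(n,k)$ has as vertices the $k$-element subsets of $[n]=\{1,\dots,n\}$, two vertices being adjacent iff they are disjoint. A vertex cut is a set $S$ of vertices whose removal disconnects the graph; $c(G\setminus S)$ is the number of connected components after deleting $S$; the toughness is $t(G)=\min_S |S|/c(G\setminus S)$ over vertex cuts $S$. *)

From mathcomp Require Import all_boot all_order all_algebra.
Set Implicit Arguments. Unset Strict Implicit. Unset Printing Implicit Defensive.
Import Order.TTheory GRing.Theory Num.Theory.

Section Graphs.
Variables (T : finType) (e : rel T).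

Definition del_adj (S : {set T}) : rel T :=
  fun x y => [&& x \notin S, y \notin S & e x y].

(* The connected component of x in G \ S (x assumed outside S). *)
Definition comp_of (S : {set T}) (x : T) : {set T} :=
  [set y in ~: S | connect (del_adj S) x y].

Definition ncomp (S : {set T}) : nat :=
  #|[set comp_of S x | x in ~: S]|.

Definition vertex_cut (S : {set T}) : bool := 1 < ncomp S.

(* The neutral element
   #|T| exceeds every ratio |S|/c(G\S) <= |S| < |T| of a vertex cut, so it only
   matters when there is no vertex cut (complete graphs), which is irrelevant here. *)
Definition toughness : rat :=
  (\big[Order.min/(#|T|%:R)]_(S : {set T} | vertex_cut S) (#|S|%:R / (ncomp S)%:R))%R.

Definition independent (I : {set T}) : bool :=
  [forall x in I, forall y in I, ~~ e x y].

Definition maximum_independent (I : {set T}) : bool :=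
  independent I && [forall J : {set T}, independent J ==> (#|J| <= #|I|)].

End Graphs.

Definition kvert (n k : nat) := {A : {set 'I_n} | #|A| == k}.

Definition kneser (n k : nat) : rel (kvert n k) :=
  fun A B => [disjoint val A & val B].
Arguments kneser n k : clear implicits.

(* Let S be a vertex cut of K(n,3) with c components.  Removing fewer than
   C(n-3,3) vertices does not disconnect K(n,3): given a separation A | B of the
   rest and meeting triples a in A, b in B, the triples disjoint from a outside A
   and those disjoint from b outside B already number C(n-3,3), by a count of
   cross-intersecting families.  Hence every component has at least C(n-3,3)
   neighbours in S.  Conversely, choosing one neighbour of s in S in each
   component adjacent to s gives an intersecting family of triples avoiding s,
   so by Erdos-Ko-Rado s is adjacent to at most C(n-4,2) components.  Double
   counting the edges between S and the components gives
   c C(n-3,3) <= |S| C(n-4,2), i.e. |S|/c >= n/3 - 1, with equality for the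
   complement of a star.  When equality holds, no component has two vertices,
   since such a component has strictly more than C(n-3,3) neighbours in S; so
   the complement of S is independent, of size C(n-1,2), hence maximum by EKR. *)

From mathcomp Require Import all_boot all_order all_algebra.
From mathcomp Require Import zify.
Set Implicit Arguments. Unset Strict Implicit. Unset Printing Implicit Defensive.

Lemma disjointP (T : finType) (A B : {set T}) :
  reflect (forall x, x \in A -> x \in B -> False) [disjoint A & B].
Proof.
rewrite -setI_eq0; apply: (iffP eqP) => [AB0 x xA xB | AB].
  by have := in_set0 x; rewrite -AB0 inE xA xB.
by apply/setP => x; rewrite !inE; apply/negP => /andP[/AB].
Qed.

Lemma card_sep_sum (T : finType) (P : {set T}) (p : pred T) :
  #|[set x in P | p x]| = \sum_(x in P) p x.
Proof.
rewrite -sum1_card [RHS]big_mkcond [LHS]big_mkcond /=; apply: eq_bigr => x _.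
by rewrite !inE; case: (x \in P); case: (p x).
Qed.

Lemma sum_card_fibers (T : finType) (R : eqType) (f : T -> R) (W : {set T}) (rs : seq R) :
  uniq rs -> \sum_(r <- rs) #|[set y in W | f y == r]| = #|[set y in W | f y \in rs]|.
Proof.
elim: rs => [_ | r rs IH /= /andP[rrs /IH {}IH]].
  by rewrite big_nil; apply/esym/eqP; rewrite cards_eq0; apply/eqP/setP => y; rewrite !inE andbF.
rewrite big_cons IH -cardsUI.
have -> : [set y in W | f y == r] :&: [set y in W | f y \in rs] = set0.
  by apply/setP => y; rewrite !inE; case: eqP => [->|]; rewrite ?(negbTE rrs) ?andbF.
by rewrite cards0 addn0; apply: eq_card => y; rewrite !inE -andb_orr.
Qed.

Lemma card_le_sum_fibers (T : finType) (R : eqType) (f : T -> R) (W : {set T}) (rs : seq R) :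
  uniq rs -> {in W, forall y, f y \in rs} ->
  #|W| <= \sum_(r <- rs) #|[set y in W | f y == r]|.
Proof.
move=> urs Wrs; rewrite sum_card_fibers //.
by apply: subset_leq_card; apply/subsetP => y yW; rewrite inE yW Wrs.
Qed.

Lemma cardsU_disjoint (T : finType) (A B : {set T}) :
  [disjoint A & B] -> #|A :|: B| = #|A| + #|B|.
Proof. by move=> dAB; rewrite cardsU (disjoint_setI0 dAB) cards0 subn0. Qed.

Lemma mul_bin_diag_sub3 m : (m - 3) * 'C(m - 4, 2) = 3 * 'C(m - 3, 3).
Proof. by rewrite -mul_bin_diag; congr (_ * 'C(_, _)); lia. Qed.

Section KSets.
Variable T : finType.
Implicit Types (U A B : {set T}) (P Q F : {set {set T}}).

Definition ksets (k : nat) U := [set A : {set T} | (A \subset U) && (#|A| == k)].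

Lemma in_ksets k U A : (A \in ksets k U) = (A \subset U) && (#|A| == k).
Proof. by rewrite inE. Qed.

Lemma card_ksets k U : #|ksets k U| = 'C(#|U|, k).
Proof. by rewrite -cards_draws; apply: eq_card => A; rewrite !inE. Qed.

Definition cross_intersecting P Q :=
  forall A B, A \in P -> B \in Q -> ~~ [disjoint A & B].

Definition intersecting F := cross_intersecting F F.

Lemma cross_intersecting_sym P Q : cross_intersecting P Q -> cross_intersecting Q P.
Proof. by move=> cPQ B A BQ AP; rewrite disjoint_sym; apply: cPQ. Qed.

Definition avoiding P B := [set A in P | [disjoint A & B]].

Lemma avoiding_ksets k U A : avoiding (ksets k U) A = ksets k (U :\: A).
Proof. by apply/setP => B; rewrite !inE subsetD andbAC. Qed.

Lemma avoiding_sub_ksets k U F B : F \subset ksets k U ->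
  avoiding F B \subset ksets k (U :\: B).
Proof.
move=> sFK; apply/subsetP => A; rewrite inE => /andP[/(subsetP sFK)].
by rewrite !in_ksets subsetD => /andP[-> ->] ->.
Qed.

Lemma intersectingS P F : P \subset F -> intersecting F -> intersecting P.
Proof. by move=> sPF iF A B /(subsetP sPF) AF /(subsetP sPF); apply: iF. Qed.

Lemma intersectingP F :
  reflect (intersecting F) [forall A in F, forall B in F, ~~ [disjoint A & B]].
Proof.
apply: (iffP forall_inP) => [iF A B AF BF | iF A AF].
  exact: (forall_inP (iF A AF)).
by apply/forall_inP => B; apply: iF.
Qed.

Lemma card_avoiding_ksets k U A : A \in ksets k U ->
  #|avoiding (ksets k U) A| = 'C(#|U| - k, k).
Proof.
rewrite in_ksets => /andP[sAU /eqP kA].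
by rewrite avoiding_ksets card_ksets cardsD (setIidPr sAU) kA.
Qed.

Lemma card_avoiding_le k U P A : P \subset ksets k U -> A \in ksets k U ->
  #|avoiding P A| <= 'C(#|U| - k, k).
Proof.
move=> sPK AK; rewrite -(card_avoiding_ksets AK).
apply/subset_leq_card/subsetP => B; rewrite !inE => /andP[/(subsetP sPK)].
by rewrite inE => -> ->.
Qed.

Lemma double_count_avoiding k U P : P \subset ksets k U ->
  #|P| * 'C(#|U| - k, k) = \sum_(B in ksets k U) #|avoiding P B|.
Proof.
move=> sPK; under [RHS]eq_bigr => B _ do rewrite card_sep_sum.
rewrite exchange_big /= -sum_nat_const; apply: eq_bigr => A AP.
rewrite -card_sep_sum -(card_avoiding_ksets (subsetP sPK A AP)).
by apply: eq_card => B; rewrite !inE disjoint_sym.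
Qed.

Lemma cross_intersecting_double_count k U P Q M :
  P \subset ksets k U -> Q \subset ksets k U -> cross_intersecting P Q ->
  (forall B, B \in ksets k U -> #|avoiding P B| <= M) ->
  #|P| * 'C(#|U| - k, k) <= ('C(#|U|, k) - #|Q|) * M.
Proof.
move=> sPK sQK cPQ PM; rewrite double_count_avoiding // (bigID [in Q]) /=.
rewrite big1 ?add0n => [|B /andP[_ BQ]]; last first.
  apply/eqP; rewrite cards_eq0; apply/eqP/setP => A; rewrite !inE.
  by apply/negP => /andP[AP dAB]; have := cPQ A B AP BQ; rewrite dAB.
apply: (@leq_trans (\sum_(B in ksets k U | B \notin Q) M)).
  by apply: leq_sum => B /andP[/PM].
rewrite (eq_bigl [in ksets k U :\: Q]) => [|B]; last by rewrite !inE andbC.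
by rewrite sum_nat_const cardsD (setIidPr sQK) card_ksets.
Qed.

Lemma cross_intersecting_card k U P Q : 2 * k <= #|U| ->
  P \subset ksets k U -> Q \subset ksets k U -> cross_intersecting P Q ->
  #|P| + #|Q| <= 'C(#|U|, k).
Proof.
move=> kU sPK sQK cPQ.
have C_gt0 : 0 < 'C(#|U| - k, k) by rewrite bin_gt0; lia.
have := cross_intersecting_double_count sPK sQK cPQ (fun B => card_avoiding_le sPK).
rewrite leq_pmul2r // => PQ.
have : #|Q| <= 'C(#|U|, k) by rewrite -card_ksets subset_leq_card.
lia.
Qed.

Lemma EKR_triples_step U F : 6 <= #|U| -> F \subset ksets 3 U -> intersecting F ->
  (forall B, B \in ksets 3 U -> #|avoiding F B| <= 'C(#|U| - 4, 2)) ->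
  #|F| <= 'C(#|U|.-1, 2).
Proof.
move=> U6 sFK iF FB.
have := cross_intersecting_double_count sFK sFK iF FB.
have F_le : #|F| <= 'C(#|U|, 3) by rewrite -card_ksets subset_leq_card.
have diagU : #|U| * 'C(#|U|.-1, 2) = 3 * 'C(#|U|, 3) by rewrite mul_bin_diag.
have diagU3 := mul_bin_diag_sub3 #|U|.
have C_gt0 : 0 < 'C(#|U| - 4, 2) by rewrite bin_gt0; lia.
move: #|F| #|U| 'C(#|U|, 3) 'C(#|U|.-1, 2) 'C(#|U| - 4, 2) 'C(#|U| - 3, 3)
  U6 F_le diagU diagU3 C_gt0 => f m c c1 d e m6 fc mc1 md d_gt0 dc.
have : f * (m - 3) * d <= 3 * (c - f) * d by rewrite -mulnA md mulnCA -mulnA leq_mul2l dc.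
rewrite leq_pmul2r // mulnBr mulnBr => h.
by rewrite -(leq_pmul2l (_ : 0 < m)); nia.
Qed.

End KSets.

Lemma cards3P (T : finType) (A : {set T}) : #|A| = 3 ->
  exists x y z, [/\ A = [set x; y; z], x != y, y != z & x != z].
Proof.
move=> A3; have /card_gt0P[x xA] : 0 < #|A| by rewrite A3.
have /cards2P[y [z [yz Axyz]]] : #|A :\ x| == 2.
  by move: A3; rewrite (cardsD1 x) xA; lia.
have : x \notin A :\ x by rewrite !inE eqxx.
rewrite Axyz !inE negb_or => /andP[xy xz].
by exists x, y, z; rewrite -(setD1K xA) Axyz setUA.
Qed.

Definition triple := (nat * nat * nat)%type.

Definition triple_seq (t : triple) := [:: t.1.1; t.1.2; t.2].

Definition meet_triples (t u : triple) := has (fun i => i \in triple_seq u) (triple_seq t).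

Definition no_four_intersecting (L : seq triple) :=
  all (fun t1 => all (fun t2 => all (fun t3 => all (fun t4 =>
    uniq [:: t1; t2; t3; t4] ==> ~~ all2rel meet_triples [:: t1; t2; t3; t4])
  L) L) L) L.

Definition covers_triples m (cls : seq (seq triple)) :=
  all (fun i => all (fun j => all (fun k => uniq [:: i; j; k] ==>
    has (has (fun t => perm_eq (triple_seq t) [:: i; j; k])) cls)
  (iota 0 m)) (iota 0 m)) (iota 0 m).

Section TripleClasses.
Variable m : nat.

Definition triple_set (t : triple) : {set 'I_m} := [set i | val i \in triple_seq t].

Lemma meet_triple_sets t u :
  ~~ [disjoint triple_set t & triple_set u] -> meet_triples t u.
Proof.
rewrite -setI_eq0 => /set0Pn[i /setIP[]].
by rewrite !in_set => it iu; apply/hasP; exists (val i).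
Qed.

Lemma class_card_le3 L (G : {set {set 'I_m}}) : no_four_intersecting L -> intersecting G ->
  #|[set A in G | A \in map triple_set L]| <= 3.
Proof.
move=> L4 iG; rewrite leqNgt; apply/negP.
case/card_geqP => s [uA s4 sAG].
case: s s4 uA sAG => [|A1 [|A2 [|A3 [|A4 []]]]] //= _ uA sAG.
have inGL A : A \in [:: A1; A2; A3; A4] -> A \in G /\ exists2 t, t \in L & A = triple_set t.
  by move/sAG; rewrite inE => /andP[AG /mapP[t tL eA]]; split; last exists t.
have /inGL[G1 [t1 t1L eA1]] : A1 \in [:: A1; A2; A3; A4] by rewrite !inE eqxx ?orbT.
have /inGL[G2 [t2 t2L eA2]] : A2 \in [:: A1; A2; A3; A4] by rewrite !inE eqxx ?orbT.
have /inGL[G3 [t3 t3L eA3]] : A3 \in [:: A1; A2; A3; A4] by rewrite !inE eqxx ?orbT.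
have /inGL[G4 [t4 t4L eA4]] : A4 \in [:: A1; A2; A3; A4] by rewrite !inE eqxx ?orbT.
subst A1 A2 A3 A4.
move/allP: L4 => /(_ t1 t1L)/allP/(_ t2 t2L)/allP/(_ t3 t3L)/allP/(_ t4 t4L).
rewrite (@map_uniq _ _ triple_set [:: t1; t2; t3; t4] uA) => /negP; apply.
apply/allrelP => t u.
by rewrite !inE => /or4P[]/eqP-> /or4P[]/eqP->; apply/meet_triple_sets/iG.
Qed.

Lemma covers_triplesP cls (A : {set 'I_m}) : covers_triples m cls -> #|A| = 3 ->
  has (fun L => A \in map triple_set L) cls.
Proof.
move=> cov /cards3P[x [y [z [-> xy yz xz]]]].
have iota_ord (i : 'I_m) : val i \in iota 0 m by rewrite mem_iota ltn_ord.
move/allP: cov => /(_ _ (iota_ord x))/allP/(_ _ (iota_ord y))/allP/(_ _ (iota_ord z)).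
rewrite /= !inE !val_eqE (negbTE xy) (negbTE yz) (negbTE xz) /=.
case/hasP => L cL /hasP[t tL pt].
apply/hasP; exists L => //; apply/mapP; exists t => //.
by apply/setP => i; rewrite [RHS]in_set (perm_mem pt) !inE !val_eqE orbA.
Qed.

Lemma card_le_classes cls (G : {set {set 'I_m}}) : all no_four_intersecting cls ->
  intersecting G -> {in G, forall A, has (fun L => A \in map triple_set L) cls} ->
  #|G| <= 3 * size cls.
Proof.
elim: cls G => [|L cls IH] G /= => [_ _ Gcov | /andP[L4 cls4] iG Gcov].
  by rewrite leqn0 cards_eq0; apply/eqP/setP => A; rewrite inE; apply/negP => /Gcov.
rewrite -(cardsID [set A in G | A \in map triple_set L]) mulnS.
apply: leq_add; first by rewrite setIdE setIA setIid -setIdE class_card_le3.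
apply: IH => // [|A]; first by apply: intersectingS iG; apply: subsetDl.
rewrite !inE => /andP[nAL AG]; have /orP[AL|//] := Gcov A AG.
by rewrite AG AL in nAL.
Qed.

Lemma intersecting_card_le_classes cls (G : {set {set 'I_m}}) :
  covers_triples m cls -> all no_four_intersecting cls ->
  G \subset ksets 3 setT -> intersecting G -> #|G| <= 3 * size cls.
Proof.
move=> cov cls4 sG iG; apply: card_le_classes => // A /(subsetP sG).
by rewrite in_ksets => /andP[_ /eqP]; apply: covers_triplesP.
Qed.

End TripleClasses.

(* Each class has no four pairwise intersecting triples, and together the
   classes cover all triples of [m]; an intersecting family therefore has at
   most [3 * size cls] members, which is [C(m - 1, 2)] for these certificates. *)
Definition classes7 : seq (seq triple) :=
 [:: [:: (0,2,3); (0,1,2); (2,3,5); (3,4,5); (0,1,6); (4,5,6); (1,4,6)];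
     [:: (2,4,6); (0,3,6); (2,4,5); (1,2,5); (3,4,6); (0,1,5); (0,1,3)];
     [:: (0,1,4); (1,3,6); (3,5,6); (0,2,5); (0,2,4); (2,5,6); (1,3,4)];
     [:: (1,3,5); (0,4,6); (0,2,6); (0,4,5); (2,3,6); (1,4,5); (1,2,3)];
     [:: (0,3,4); (2,3,4); (1,2,4); (0,5,6); (0,3,5); (1,2,6); (1,5,6)]].

Definition classes8 : seq (seq triple) :=
 [:: [:: (2,5,7); (0,4,6); (3,4,7); (0,1,2); (1,2,5); (3,5,7); (3,4,6); (0,1,6)];
     [:: (2,4,6); (0,2,6); (1,3,7); (2,4,5); (0,3,6); (1,5,7); (0,1,3); (4,5,7)];
     [:: (0,1,4); (2,3,4); (2,6,7); (2,3,7); (0,5,6); (5,6,7); (0,1,5); (1,3,4)];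
     [:: (1,4,7); (0,2,3); (0,1,7); (0,3,7); (2,3,5); (2,5,6); (4,5,6); (1,4,6)];
     [:: (1,3,5); (4,6,7); (1,3,6); (0,2,5); (1,6,7); (0,2,4); (0,3,5); (2,4,7)];
     [:: (0,3,4); (0,2,7); (1,2,7); (3,5,6); (3,4,5); (1,2,6); (1,5,6); (0,4,7)];
     [:: (1,2,4); (0,4,5); (0,6,7); (2,3,6); (1,4,5); (1,2,3); (3,6,7); (0,5,7)]].

Lemma covers_classes7 : covers_triples 7 classes7. Proof. by vm_compute. Qed.
Lemma no_four_classes7 : all no_four_intersecting classes7. Proof. by vm_compute. Qed.
Lemma covers_classes8 : covers_triples 8 classes8. Proof. by vm_compute. Qed.
Lemma no_four_classes8 : all no_four_intersecting classes8. Proof. by vm_compute. Qed.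

Lemma EKR_triples_7_8 m (G : {set {set 'I_m}}) : (m == 7) || (m == 8) ->
  G \subset ksets 3 setT -> intersecting G -> #|G| <= 'C(m.-1, 2).
Proof.
case/orP => /eqP m78; move: G; rewrite m78 => G sG iG.
  exact: intersecting_card_le_classes covers_classes7 no_four_classes7 sG iG.
exact: intersecting_card_le_classes covers_classes8 no_four_classes8 sG iG.
Qed.

Lemma intersecting_ksets_ord (T : finType) k (U : {set T}) (F : {set {set T}}) :
  F \subset ksets k U -> intersecting F ->
  exists2 G : {set {set 'I_#|U|}}, G \subset ksets k setT /\ intersecting G & #|G| = #|F|.
Proof.
move=> sFK iF; pose f : 'I_#|U| -> T := enum_val.
have f_inj : injective f := @enum_val_inj _ _.
have sFU (A : {set T}) : A \in F -> A \subset U.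
  by move=> /(subsetP sFK); rewrite in_ksets => /andP[].
have f_preK (A : {set T}) : A \subset U -> f @: (f @^-1: A) = A.
  move=> sAU; apply/setP => x; apply/imsetP/idP => [[i]|xA]; first by rewrite inE => iA ->.
  have xU := subsetP sAU x xA.
  by exists (enum_rank_in xU x); rewrite ?inE /f enum_rankK_in.
exists [set f @^-1: A | A : {set T} in F]; first split.
- apply/subsetP => _ /imsetP[A AF ->]; rewrite in_ksets subsetT.
  rewrite -(card_imset _ f_inj) f_preK ?sFU //.
  by move/(subsetP sFK): AF; rewrite in_ksets => /andP[_ ->].
- move=> _ _ /imsetP[A AF ->] /imsetP[B BF ->]; apply: contra (iF A B AF BF) => dAB.
  by rewrite -(f_preK A) ?sFU // -(f_preK B) ?sFU // imset_disjoint.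
apply: card_in_imset => A B AF BF eAB.
by rewrite -(f_preK A) ?sFU // eAB f_preK ?sFU.
Qed.

Theorem EKR_triples (T : finType) (U : {set T}) (F : {set {set T}}) : 6 <= #|U| ->
  F \subset ksets 3 U -> intersecting F -> #|F| <= 'C(#|U|.-1, 2).
Proof.
move Em : #|U| => m; elim/ltn_ind: m => m IH in U F Em *; move=> m6 sFK iF.
have [m78 | m78] := boolP ((m == 7) || (m == 8)).
  have [G [sG iG] <-] := intersecting_ksets_ord sFK iF.
  by rewrite -Em; apply: EKR_triples_7_8; rewrite ?Em.
rewrite -Em; apply: EKR_triples_step; rewrite ?Em // => B BK.
have UB : #|U :\: B| = m - 3.
  by move: BK; rewrite in_ksets cardsD Em => /andP[/setIidPr-> /eqP->].
have [m6' | m9] : m = 6 \/ 9 <= m by lia.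
  by apply: leq_trans (card_avoiding_le sFK BK) _; rewrite Em m6'.
have -> : m - 4 = (m - 3).-1 by lia.
apply: (IH (m - 3) _ (U :\: B) _ UB); [lia | lia | exact: avoiding_sub_ksets |].
by apply: intersectingS iF; apply/subsetP => A; rewrite inE => /andP[].
Qed.

Section CrossIntersectingExtensions.
Variable T : finType.
Implicit Types (U c d s t x p : {set T}) (P Q : {set {set T}}).

Lemma extension_diffK s p : [disjoint p & s] -> (s :|: p) :\: s = p.
Proof. by move=> dps; rewrite setDUl setDv set0U; apply/setDidPl. Qed.

Lemma extensions_ksets k U s P : [disjoint s & U] ->
  (forall x, x \in P -> exists2 p, p \in ksets k U & x = s :|: p) ->
  [set x :\: s | x in P] \subset ksets k U /\ #|[set x :\: s | x in P]| = #|P|.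
Proof.
move=> dsU Ps.
have dps p : p \in ksets k U -> [disjoint p & s].
  by rewrite in_ksets disjoint_sym => /andP[sU _]; apply: disjointWr sU dsU.
split; first by apply/subsetP => _ /imsetP[_ /Ps[p pK ->] ->]; rewrite extension_diffK ?dps.
apply: card_in_imset => _ _ /Ps[p1 p1K ->] /Ps[p2 p2K ->].
by rewrite !extension_diffK ?dps // => ->.
Qed.

Lemma cross_intersecting_extensions k U s t P Q :
  [disjoint s & U] -> [disjoint t & U] -> [disjoint s & t] -> 2 * k <= #|U| ->
  (forall x, x \in P -> exists2 p, p \in ksets k U & x = s :|: p) ->
  (forall y, y \in Q -> exists2 q, q \in ksets k U & y = t :|: q) ->
  cross_intersecting P Q -> #|P| + #|Q| <= 'C(#|U|, k).
Proof.
move=> dsU dtU dst kU Ps Qt cPQ.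
have [sPK cardP] := extensions_ksets dsU Ps.
have [sQK cardQ] := extensions_ksets dtU Qt.
rewrite -cardP -cardQ.
apply: cross_intersecting_card => // _ _ /imsetP[x xP ->] /imsetP[y yQ ->].
have /Ps[p pK ex] := xP; have /Qt[q qK ey] := yQ.
move: (pK) (qK); rewrite !in_ksets => /andP[pU _] /andP[qU _].
have dps : [disjoint p & s] by rewrite disjoint_sym (disjointWr pU dsU).
have dqt : [disjoint q & t] by rewrite disjoint_sym (disjointWr qU dtU).
rewrite ex ey !extension_diffK //.
apply: contra (cPQ _ _ xP yQ) => dpq; rewrite ex ey; apply/disjointP => z.
rewrite !inE => /orP[zs|zp] /orP[zt|zq].
- by rewrite (disjointFr dst zs) in zt.
- by have := subsetP qU z zq; rewrite (disjointFr dsU zs).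
- by have := subsetP pU z zp; rewrite (disjointFr dtU zt).
- by rewrite (disjointFr dpq zp) in zq.
Qed.

Lemma split_triple c d x : [disjoint x & d] -> #|x| = 3 ->
  exists2 p, p \in ksets (3 - #|x :&: c|) (~: (d :|: c)) & x = (x :&: c) :|: p.
Proof.
move=> dxd x3; exists (x :\: c); last by rewrite setID.
rewrite in_ksets cardsD x3 eqxx andbT.
apply/subsetP => z; rewrite !inE negb_or => /andP[zc zx]; rewrite zc andbT.
by rewrite (disjointFr dxd zx).
Qed.

Lemma subset_pairP (u v : T) s : s \subset [set u; v] -> s != set0 ->
  s \in [:: [set u]; [set v]; [set u; v]].
Proof.
move=> suv /set0Pn[w ws]; rewrite !inE; apply/or3P.
have sv z : z \in s -> (z == u) || (z == v) by move/(subsetP suv); rewrite !inE.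
case us: (u \in s); case vs: (v \in s).
- by constructor 3; rewrite eqEsubset suv subUset !sub1set us vs.
- constructor 1; rewrite eqEsubset sub1set us andbT; apply/subsetP => z zs.
  by rewrite inE; have /orP[//|/eqP zv] := sv z zs; rewrite -zv zs in vs.
- constructor 2; rewrite eqEsubset sub1set vs andbT; apply/subsetP => z zs.
  by rewrite inE; have /orP[/eqP zu|//] := sv z zs; rewrite -zu zs in us.
- by case/orP: (sv w ws) => /eqP ew; rewrite -ew ws in us vs.
Qed.

Lemma uniq_pair_subsets (u v : T) : u != v -> uniq [:: [set u]; [set v]; [set u; v]].
Proof.
move=> uv; have ne_pair w : [set w] != [set u; v].
  by apply/eqP => e; have := cards2 u v; rewrite -e cards1 uv.
rewrite /= !inE !(negbTE (ne_pair _)) orbF !andbT.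
by apply: contra uv => /eqP/set1_inj ->.
Qed.

End CrossIntersectingExtensions.

Section TwoMeetingTriples.
Variable T : finType.
Implicit Types (s t q : {set T}).
Hypothesis T9 : 9 <= #|T|.
Variables a b : {set T}.
Hypotheses (a3 : #|a| = 3) (b3 : #|b| = 3) (ab_meet : ~~ [disjoint a & b]) (ab : a != b).
Variables P Q : {set {set T}}.
Hypothesis P_ok : forall x, x \in P -> [&& #|x| == 3, [disjoint x & a] & ~~ [disjoint x & b]].
Hypothesis Q_ok : forall y, y \in Q -> [&& #|y| == 3, [disjoint y & b] & ~~ [disjoint y & a]].
Hypothesis cPQ : cross_intersecting P Q.

Local Notation U := (~: (a :|: b)).
Local Notation Nab := (ksets 3 (~: b) :\: ksets 3 (~: a)).

Lemma card_outside_ge4 : 4 <= #|U|.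
Proof.
have : 0 < #|a :&: b| by rewrite card_gt0 setI_eq0.
by have := cardsC (a :|: b); rewrite cardsU a3 b3; lia.
Qed.

Lemma card_ksets_le_fiber t k : t \subset a :\: b -> #|t| + k = 3 -> 0 < #|t| ->
  'C(#|U|, k) <= #|[set y in Nab | y :&: a == t]|.
Proof.
move=> tab tk /card_gt0P[z zt].
have ta : t \subset a by apply: subset_trans tab (subsetDl _ _).
have tb : t \subset ~: b by apply: subset_trans tab _; rewrite setDE subsetIr.
have qat q : q \in ksets k U -> [/\ [disjoint q & t], q :&: a = set0 & q \subset ~: b].
  rewrite in_ksets => /andP[qU _]; have qa : q \subset ~: a.
    by apply: subset_trans qU _; rewrite setCS subsetUl.
  split; first by rewrite disjoints_subset (subset_trans qa) ?setCS.
    by apply/disjoint_setI0; rewrite disjoints_subset.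
  by apply: subset_trans qU _; rewrite setCS subsetUr.
rewrite -card_ksets -(card_in_imset (f := fun q => t :|: q)); last first.
  move=> q1 q2 /qat[q1t _ _] /qat[q2t _ _] /= e12.
  by rewrite -(extension_diffK q1t) e12 extension_diffK.
apply/subset_leq_card/subsetP => _ /imsetP[q /[dup] /qat[qt qa qb] qK ->].
have tq3 : #|t :|: q| = 3.
  move: qK; rewrite in_ksets -tk => /andP[_ /eqP <-].
  by rewrite -cardsUI (disjoint_setI0 (_ : [disjoint t & q])) 1?disjoint_sym ?cards0 ?addn0.
rewrite !inE tq3 eqxx !andbT -disjoints_subset -setI_eq0 setIUl qa setU0.
by rewrite (setIidPl ta) eqxx subUset tb qb !andbT; apply/set0Pn; exists z.
Qed.

Lemma fiber_pair_bound s t : s \subset b :\: a -> t \subset a :\: b ->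
  #|s| = #|t| -> 0 < #|t| ->
  #|[set x in P | x :&: b == s]| + #|[set y in Q | y :&: a == t]|
    <= #|[set y in Nab | y :&: a == t]|.
Proof.
move=> sba tab st t_gt0; have U4 := card_outside_ge4.
apply: leq_trans (card_ksets_le_fiber tab (subnKC (_ : #|t| <= 3)) t_gt0); last first.
  by rewrite -a3 subset_leq_card // (subset_trans tab) ?subsetDl.
have sb : s \subset b by apply: subset_trans sba (subsetDl _ _).
have ta : t \subset a by apply: subset_trans tab (subsetDl _ _).
apply: (cross_intersecting_extensions (s := s) (t := t)).
- by rewrite disjoints_subset setCK (subset_trans sb) ?subsetUr.
- by rewrite disjoints_subset setCK (subset_trans ta) ?subsetUl.
- apply/disjointP => z /(subsetP sba) + /(subsetP tab).
  by rewrite !inE => /andP[/negP za _] /andP[_].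
- by lia.
- move=> x; rewrite inE => /andP[/P_ok/and3P[/eqP x3 dxa _] /eqP xbs].
  by rewrite -st -xbs; apply: split_triple.
- move=> y; rewrite inE => /andP[/Q_ok/and3P[/eqP y3 dyb _] /eqP yat].
  by rewrite setUC -yat; apply: split_triple.
- by move=> x y; rewrite !inE => /andP[xP _] /andP[yQ _]; apply: cPQ.
Qed.

(* The traces [x :&: b] of P and [y :&: a] of Q are paired by size; each pair of
   classes is a cross-intersecting pair of extension families over [U], and is
   dominated by the class of [Nab] with the same trace on [a]. *)
Lemma card_le_by_pairing (ps : seq ({set T} * {set T})) :
  uniq (unzip1 ps) -> uniq (unzip2 ps) ->
  (forall st, st \in ps -> [/\ st.1 \subset b :\: a, st.2 \subset a :\: b,
                               #|st.1| = #|st.2| & 0 < #|st.2|]) ->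
  {in P, forall x, x :&: b \in unzip1 ps} -> {in Q, forall y, y :&: a \in unzip2 ps} ->
  #|P| + #|Q| <= #|Nab|.
Proof.
move=> u1 u2 ps_ok Pcov Qcov.
apply: leq_trans (leq_add (card_le_sum_fibers u1 Pcov) (card_le_sum_fibers u2 Qcov)) _.
rewrite !big_map -big_split /=.
apply: (@leq_trans (\sum_(st <- ps) #|[set y in Nab | y :&: a == st.2]|)).
  rewrite big_seq_cond [X in _ <= X]big_seq_cond; apply: leq_sum => st /andP[+ _].
  by case/ps_ok => sba tab st_eq t_gt0; apply: fiber_pair_bound.
rewrite -(big_map snd xpredT (fun t => #|[set y in Nab | y :&: a == t]|)).
by rewrite sum_card_fibers //; apply/subset_leq_card/subsetP => y; rewrite inE => /andP[].
Qed.

Lemma card_meeting_pairs : #|P| + #|Q| <= #|Nab|.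
Proof.
have ab_gt0 : 0 < #|a :&: b| by rewrite card_gt0 setI_eq0.
have ab_lt3 : #|a :&: b| < 3.
  rewrite ltn_neqAle -{2}a3 subset_leq_card ?subsetIl // andbT.
  apply: contra ab => /eqP ab3; have /eqP <- : a :&: b == a by rewrite eqEcard subsetIl a3 ab3.
  by rewrite eqEcard subsetIr b3 ab3.
have cba : #|b :\: a| = 3 - #|a :&: b| by rewrite cardsD setIC b3.
have cab : #|a :\: b| = 3 - #|a :&: b| by rewrite cardsD a3.
have Pcov x : x \in P -> x :&: b \subset b :\: a /\ x :&: b != set0.
  case/P_ok/and3P => _ dxa nxb; rewrite setI_eq0 nxb; split=> //.
  by rewrite setDE subsetI subsetIr -disjoints_subset (disjointWl (subsetIl x b) dxa).
have Qcov y : y \in Q -> y :&: a \subset a :\: b /\ y :&: a != set0.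
  case/Q_ok/and3P => _ dyb nya; rewrite setI_eq0 nya; split=> //.
  by rewrite setDE subsetI subsetIr -disjoints_subset (disjointWl (subsetIl y a) dyb).
have [ab2 | ab1] : #|a :&: b| = 2 \/ #|a :&: b| = 1 by lia.
  apply: (@card_le_by_pairing [:: (b :\: a, a :\: b)]) => //= [st|x /Pcov|y /Qcov].
  - by rewrite inE => /eqP-> /=; rewrite cba cab ab2.
  - by case=> sx nx; rewrite inE eqEcard sx cba ab2 card_gt0 nx.
  - by case=> sy ny; rewrite inE eqEcard sy cab ab2 card_gt0 ny.
have /cards2P[b1 [b2 [b12 eb]]] : #|b :\: a| == 2 by rewrite cba ab1.
have /cards2P[a1 [a2 [a12 ea]]] : #|a :\: b| == 2 by rewrite cab ab1.
apply: (@card_le_by_pairing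
  [:: ([set b1], [set a1]); ([set b2], [set a2]); ([set b1; b2], [set a1; a2])]).
- exact: uniq_pair_subsets.
- exact: uniq_pair_subsets.
- rewrite eb ea => st; rewrite !inE => /or3P[]/eqP-> /=;
    by rewrite ?cards1 ?cards2 ?a12 ?b12 ?subxx ?sub1set; split; rewrite // !inE eqxx ?orbT.
- by move=> x /Pcov[]; rewrite eb; apply: subset_pairP.
- by move=> y /Qcov[]; rewrite ea; apply: subset_pairP.
Qed.

End TwoMeetingTriples.

Section Separators.
Variable T : finType.
Hypothesis T9 : 9 <= #|T|.
Implicit Types (A B : {set {set T}}) (a b w x Z : {set T}).

Local Notation triples := (ksets 3 [set: T]).

Lemma in_triples x : (x \in triples) = (#|x| == 3).
Proof. by rewrite in_ksets subsetT. Qed.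

Lemma in_ksets_setC x a : (x \in ksets 3 (~: a)) = (#|x| == 3) && [disjoint x & a].
Proof. by rewrite in_ksets -disjoints_subset andbC. Qed.

Lemma card_ksets_setC a : #|a| = 3 -> #|ksets 3 (~: a)| = 'C(#|T| - 3, 3).
Proof. by move=> a3; rewrite card_ksets cardsCs setCK a3. Qed.

Lemma triple_through (p : T) Z : #|Z| <= 6 -> p \notin Z ->
  exists w, [/\ #|w| = 3, p \in w & [disjoint w & Z]].
Proof.
move=> Z6 pZ; have : 1 < #|~: (p |: Z)| by rewrite cardsCs setCK cardsU1 pZ; lia.
case/card_gt1P => u [v [+ + uv]]; rewrite !inE !negb_or => /andP[up uZ] /andP[vp vZ].
exists (p |: [set u; v]); split.
- by rewrite cardsU1 cards2 uv !inE negb_or !(eq_sym p) up vp.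
- by rewrite !inE eqxx.
by apply/disjointP => z; rewrite !inE => /or3P[]/eqP->; apply/negP.
Qed.

Lemma triples_card A a : A \subset triples -> a \in A -> #|a| = 3.
Proof. by move=> sA /(subsetP sA); rewrite in_triples => /eqP. Qed.

Lemma neighbourhoods_sub_separator A B a b : cross_intersecting A B -> a \in A -> b \in B ->
  (ksets 3 (~: a) :\: A) :|: (ksets 3 (~: b) :\: B) \subset triples :\: (A :|: B).
Proof.
move=> cAB aA bB; apply/subsetP => x.
rewrite !in_setU !in_setD !in_ksets_setC in_triples in_setU negb_or.
case/orP => /and3P[xnA -> dx]; rewrite ?xnA andbT ?andbT.
  by apply: contraL dx => xB; rewrite disjoint_sym; apply: cAB.
by apply: contraL dx => xA; apply: cAB.
Qed.

Lemma card_neighbourhoods_ge A B a b : A \subset triples -> B \subset triples ->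
  [disjoint A & B] -> cross_intersecting A B -> a \in A -> b \in B ->
  'C(#|T| - 3, 3) <= #|(ksets 3 (~: a) :\: A) :|: (ksets 3 (~: b) :\: B)|.
Proof.
move=> sA sB dAB cAB aA bB.
have a3 := triples_card sA aA; have b3 := triples_card sB bB.
have ab : a != b by apply: contraTneq aA => ->; rewrite (disjointFl dAB bB).
set Na := ksets 3 (~: a); set Nb := ksets 3 (~: b).
have P_ok x : x \in Na :&: A -> [&& #|x| == 3, [disjoint x & a] & ~~ [disjoint x & b]].
  by rewrite inE in_ksets_setC => /andP[/andP[-> ->] xA]; apply: cAB.
have Q_ok y : y \in Nb :&: B -> [&& #|y| == 3, [disjoint y & b] & ~~ [disjoint y & a]].
  by rewrite inE in_ksets_setC => /andP[/andP[-> ->] yB]; apply: (cross_intersecting_sym cAB).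
have cPQ : cross_intersecting (Na :&: A) (Nb :&: B).
  by move=> x y /setIP[_ xA] /setIP[_ yB]; apply: cAB.
have := card_meeting_pairs T9 a3 b3 (cAB a b aA bB) ab P_ok Q_ok cPQ.
have sY : (Nb :\: Na) :\: B \subset Nb :\: B.
  by apply/subsetP => x; rewrite !inE => /and3P[-> _ ->].
have dXY : [disjoint Na :\: A & (Nb :\: Na) :\: B].
  by apply/disjointP => x; rewrite !inE => /andP[_ ->] /and3P[].
have := subset_leq_card (setUS (Na :\: A) sY); rewrite cardsU_disjoint //.
have NbB : #|(Nb :\: Na) :&: B| <= #|Nb :&: B| by apply/subset_leq_card/setSI/subsetDl.
have NaA : #|Na :&: A| <= #|Na| by apply/subset_leq_card/subsetIl.
have cNa : #|Na| = 'C(#|T| - 3, 3) by apply: card_ksets_setC.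
rewrite [#|Na :\: A|]cardsD [#|_ :\: B|]cardsD -/Na -/Nb; move: NbB NaA cNa.
(* Generalizing the cardinals turns them into atoms that [lia] recognizes as equal. *)
by move: #|Na| #|Na :&: A| #|Nb :\: Na| #|(Nb :\: Na) :&: B| #|Nb :&: B|; lia.
Qed.

Lemma card_separator_ge A B : A \subset triples -> B \subset triples ->
  [disjoint A & B] -> cross_intersecting A B -> A != set0 -> B != set0 ->
  'C(#|T| - 3, 3) <= #|triples :\: (A :|: B)|.
Proof.
move=> sA sB dAB cAB /set0Pn[a aA] /set0Pn[b bB].
apply: leq_trans (card_neighbourhoods_ge sA sB dAB cAB aA bB) _.
exact/subset_leq_card/neighbourhoods_sub_separator.
Qed.

Lemma avoider_notin A B a x : intersecting A -> cross_intersecting A B -> a \in A ->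
  [disjoint x & a] -> x \notin A :|: B.
Proof.
move=> iA cAB aA dxa; rewrite inE negb_or.
by apply/andP; split; apply: contraL dxa => xAB; rewrite disjoint_sym; [apply: iA | apply: cAB].
Qed.

Lemma card_separator_gt_intersecting A B : A \subset triples -> cross_intersecting A B ->
  intersecting A -> 1 < #|A| -> 'C(#|T| - 3, 3) < #|triples :\: (A :|: B)|.
Proof.
move=> sA cAB iA /card_gt1P[a1 [a2 [a1A a2A a12]]].
have a1_3 := triples_card sA a1A; have a2_3 := triples_card sA a2A.
have /subsetPn[p pa1 pa2] : ~~ (a1 \subset a2).
  by apply: contra a12 => s12; rewrite eqEcard s12 a1_3 a2_3.
have [w [w3 pw dwa2]] : exists w, [/\ #|w| = 3, p \in w & [disjoint w & a2]].
  by apply: triple_through pa2; rewrite a2_3.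
have sep : w |: ksets 3 (~: a1) \subset triples :\: (A :|: B).
  apply/subsetP => x; rewrite in_setU1 in_setD in_triples.
  case/orP => [/eqP-> | ]; first by rewrite w3 (avoider_notin iA cAB a2A dwa2).
  by rewrite in_ksets_setC => /andP[-> dxa1]; rewrite (avoider_notin iA cAB a1A dxa1).
have wN : w \notin ksets 3 (~: a1).
  by rewrite in_ksets_setC negb_and; apply/orP; right; apply/negP => /disjointP/(_ p pw pa1).
by apply: leq_trans (subset_leq_card sep); rewrite cardsU1 wN card_ksets_setC.
Qed.

Lemma card_separator_gt_disjoint_pairs A B a a' b b' : A \subset triples -> B \subset triples ->
  [disjoint A & B] -> cross_intersecting A B -> a \in A -> a' \in A -> b \in B -> b' \in B ->
  [disjoint a & a'] -> [disjoint b & b'] -> 'C(#|T| - 3, 3) < #|triples :\: (A :|: B)|.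
Proof.
move=> sA sB dAB cAB aA a'A bB b'B daa' dbb'.
have [p /setIP[pa pb]] : exists p, p \in a :&: b by apply/set0Pn; rewrite setI_eq0 cAB.
have a'b'6 : #|a' :|: b'| <= 6.
  by rewrite cardsU (triples_card sA a'A) (triples_card sB b'B) leq_subr.
have [w [w3 pw dw]] : exists w, [/\ #|w| = 3, p \in w & [disjoint w & a' :|: b']].
  by apply: triple_through a'b'6 _; rewrite inE (disjointFr daa' pa) (disjointFr dbb' pb).
have wA : w \notin A.
  by apply: contraL (disjointWr (subsetUr _ _) dw) => wA; apply: cAB.
have wB : w \notin B.
  by apply: contraL (disjointWr (subsetUl _ _) dw) => wB; rewrite disjoint_sym; apply: cAB.
have wa : ~~ [disjoint w & a] by apply/negP => /disjointP/(_ p pw pa).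
have wb : ~~ [disjoint w & b] by apply/negP => /disjointP/(_ p pw pb).
set R := (ksets 3 (~: a) :\: A) :|: (ksets 3 (~: b) :\: B).
have sep : w |: R \subset triples :\: (A :|: B).
  apply/subsetP => x; rewrite in_setU1 => /orP[/eqP-> | xR].
    by rewrite in_setD in_setU negb_or wA wB in_triples w3.
  exact: (subsetP (neighbourhoods_sub_separator cAB aA bB)).
have wR : w \notin R by rewrite !in_setU !in_setD !in_ksets_setC (negbTE wa) (negbTE wb) !andbF.
apply: leq_trans (subset_leq_card sep); rewrite cardsU1 wR add1n ltnS.
exact: card_neighbourhoods_ge.
Qed.

Lemma card_separator_gt A B : A \subset triples -> B \subset triples ->
  [disjoint A & B] -> cross_intersecting A B -> 1 < #|A| -> 1 < #|B| ->
  'C(#|T| - 3, 3) < #|triples :\: (A :|: B)|.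
Proof.
move=> sA sB dAB cAB A1 B1.
have [/intersectingP iA | ] := boolP [forall a in A, forall a' in A, ~~ [disjoint a & a']].
  exact: card_separator_gt_intersecting.
case/forall_inPn => a aA /forall_inPn[a' a'A]; rewrite negbK => daa'.
have [/intersectingP iB | ] := boolP [forall b in B, forall b' in B, ~~ [disjoint b & b']].
  by rewrite setUC; apply: (card_separator_gt_intersecting sB (cross_intersecting_sym cAB)).
case/forall_inPn => b bB /forall_inPn[b' b'B]; rewrite negbK => dbb'.
exact: (card_separator_gt_disjoint_pairs sA sB dAB cAB aA a'A bB b'B daa' dbb').
Qed.

End Separators.

Lemma ltn_sum_const (I : finType) (X : {set I}) (f : I -> nat) m i0 : i0 \in X ->
  (forall i, i \in X -> m <= f i) -> m < f i0 -> #|X| * m < \sum_(i in X) f i.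
Proof.
move=> i0X fm fi0; rewrite (bigD1 i0) //= (cardsD1 i0 X) i0X add1n mulSn -addSn.
rewrite leq_add // -sum_nat_const (eq_bigl (fun i => (i \in X) && (i != i0))).
  by apply: leq_sum => i /andP[/fm].
by move=> i; rewrite !inE andbC.
Qed.

Section Components.
Variables (T : finType) (e : rel T).
Hypothesis e_sym : symmetric e.
Implicit Types (S C : {set T}) (x y z : T).

Definition comps S := [set comp_of e S x | x in ~: S].

Definition nbr_in S C := [set s in S | [exists y in C, e y s]].

Lemma del_adj_sym S : symmetric (del_adj e S).
Proof. by move=> x y; rewrite /del_adj e_sym; case: (x \notin S); case: (y \notin S). Qed.

Lemma mem_comp S x y : (y \in comp_of e S x) = (y \notin S) && connect (del_adj e S) x y.
Proof. by rewrite inE in_setC. Qed.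

Lemma comp_self S x : x \notin S -> x \in comp_of e S x.
Proof. by move=> xS; rewrite mem_comp xS connect0. Qed.

Lemma comp_of_eq S x y : y \in comp_of e S x -> comp_of e S y = comp_of e S x.
Proof.
rewrite mem_comp => /andP[_ cxy]; apply/setP => z; rewrite !mem_comp.
case: (z \notin S) => //=; apply/idP/idP => [|cxz]; first exact: connect_trans.
by apply: connect_trans cxz; rewrite (sym_connect_sym (del_adj_sym S)).
Qed.

Lemma comp_adj S x y z : y \in comp_of e S x -> z \notin S -> e y z -> z \in comp_of e S x.
Proof.
rewrite !mem_comp => /andP[yS cxy] zS eyz; rewrite zS.
by apply: connect_trans cxy (connect1 _); rewrite /del_adj yS zS.
Qed.

Lemma comps_inv S C y : C \in comps S -> y \in C -> C = comp_of e S y.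
Proof. by case/imsetP => x _ -> /comp_of_eq ->. Qed.

Lemma comps_witness S C : C \in comps S -> exists2 x, x \notin S & x \in C.
Proof. by case/imsetP => x; rewrite in_setC => xS ->; exists x; rewrite ?comp_self. Qed.

Lemma comps_subC S C : C \in comps S -> C \subset ~: S.
Proof. by case/imsetP => x _ ->; apply/subsetP => y; rewrite mem_comp in_setC => /andP[]. Qed.

Lemma comps_sep S C C' y z : C \in comps S -> C' \in comps S -> C != C' ->
  y \in C -> z \in C' -> (y != z) && ~~ e y z.
Proof.
move=> CS C'S CC' yC zC'; rewrite (comps_inv CS yC) (comps_inv C'S zC') in CC'.
apply/andP; split; first by apply: contraNneq CC' => ->.
apply: contraNN CC' => eyz; apply/eqP/esym/comp_of_eq; apply: comp_adj _ _ eyz.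
  by apply: comp_self; rewrite -in_setC (subsetP (comps_subC CS)).
by rewrite -in_setC (subsetP (comps_subC C'S)).
Qed.

Lemma nbr_sep S C y z : C \in comps S -> y \in C -> z \notin C :|: nbr_in S C -> ~~ e y z.
Proof.
move=> CS yC; rewrite in_setU negb_or => /andP[zC zN]; apply: contraNN zN => eyz.
case: (boolP (z \in S)) => zS; first by rewrite inE zS; apply/existsP; exists y; rewrite yC.
by move: zC; rewrite (comps_inv CS yC) (comp_adj _ zS eyz) // -(comps_inv CS yC).
Qed.

Lemma setC_comp_nbr S C : C \in comps S -> ~: (C :|: ~: (C :|: nbr_in S C)) = nbr_in S C.
Proof.
move=> CS; rewrite setCU setCK setIUr [~: C :&: C]setIC setICr set0U; apply/setIidPr.
apply/subsetP => s; rewrite inE => /andP[sS _]; rewrite in_setC.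
by apply: contraL sS => /(subsetP (comps_subC CS)); rewrite in_setC.
Qed.

Lemma independent_comp_of S x : independent e (~: S) -> x \notin S -> comp_of e S x = [set x].
Proof.
move=> /forall_inP iS xS; apply/setP => y; rewrite mem_comp inE.
apply/andP/eqP => [[_ /connectP[p]] | ->]; last by rewrite xS connect0.
case: p => [_ -> // | z p /= /andP[/and3P[_ zS exz] _] _].
have /forall_inP/(_ z) : [forall y in ~: S, ~~ e x y] by apply: iS; rewrite inE.
by rewrite inE exz => /(_ zS).
Qed.

Lemma independent_ncomp S : independent e (~: S) -> ncomp e S = #|~: S|.
Proof.
move=> iS; rewrite /ncomp (eq_in_imset (g := set1)) => [|x]; last first.
  by rewrite inE => /(independent_comp_of iS).
by rewrite card_imset //; apply: set1_inj.
Qed.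

Lemma trivial_comps_independent S : irreflexive e ->
  {in comps S, forall C, #|C| <= 1} -> independent e (~: S).
Proof.
move=> e_irr triv.
apply/forall_inP => x; rewrite inE => xS; apply/forall_inP => y; rewrite inE => yS.
apply/negP => exy; have := comp_adj (comp_self xS) yS exy.
have /eqP <- : [set x] == comp_of e S x.
  rewrite eqEcard sub1set comp_self // cards1 triv //.
  by apply/imsetP; exists x; rewrite ?inE.
by rewrite inE => /eqP eyx; rewrite eyx e_irr in exy.
Qed.

End Components.

Section KneserCuts.
Variable n : nat.
Hypothesis n9 : 9 <= n.
Local Notation V := (kvert n 3).
Local Notation e := (kneser n 3).
Implicit Types (S C : {set V}) (x y : V).

Lemma card_val x : #|val x| = 3.
Proof. exact: eqP (valP x). Qed.

Lemma kneser_sym : symmetric e.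
Proof. by move=> x y; rewrite /kneser disjoint_sym. Qed.

Lemma kneser_irr : irreflexive e.
Proof.
move=> x; have /card_gt0P[i ix] : 0 < #|val x| by rewrite card_val.
by apply/negP => /disjointP/(_ i ix ix).
Qed.

Section Separation.
Variables A0 B0 : {set V}.
Hypotheses (dAB0 : [disjoint A0 & B0]) (noedge : forall y z, y \in A0 -> z \in B0 -> ~~ e y z).

Let A := [set val x | x in A0].
Let B := [set val x | x in B0].

Lemma vals_triples (D : {set V}) : [set val x | x in D] \subset ksets 3 [set: 'I_n].
Proof. by apply/subsetP => _ /imsetP[x _ ->]; rewrite in_triples card_val. Qed.

Lemma vals_disjoint : [disjoint A & B].
Proof.
apply/disjointP => _ /imsetP[x xA ->] /imsetP[y yB /val_inj exy].
by move: (disjointFr dAB0 xA); rewrite exy yB.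
Qed.

Lemma vals_cross : cross_intersecting A B.
Proof. by move=> _ _ /imsetP[x xA ->] /imsetP[y yB ->]; apply: noedge. Qed.

Lemma card_vals_separator : #|ksets 3 [set: 'I_n] :\: (A :|: B)| <= #|~: (A0 :|: B0)|.
Proof.
rewrite -[#|~: _|](card_imset _ val_inj); apply/subset_leq_card/subsetP => t.
rewrite in_setD in_setU in_triples negb_or => /andP[/andP[tA tB] t3].
set x : V := exist _ t t3; apply/imsetP; exists x => //; rewrite !inE negb_or.
by apply/andP; split; [apply: contra tA | apply: contra tB] => xAB; apply/imsetP; exists x.
Qed.

Lemma kneser_separator_ge : A0 != set0 -> B0 != set0 -> 'C(n - 3, 3) <= #|~: (A0 :|: B0)|.
Proof.
move=> /set0Pn[x xA] /set0Pn[y yB]; apply: leq_trans card_vals_separator.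
have n9' : 9 <= #|'I_n| by rewrite card_ord.
have := card_separator_ge n9' (vals_triples A0) (vals_triples B0) vals_disjoint vals_cross.
rewrite card_ord; apply; apply/set0Pn; [exists (val x) | exists (val y)]; exact: imset_f.
Qed.

Lemma kneser_separator_gt : 1 < #|A0| -> 1 < #|B0| -> 'C(n - 3, 3) < #|~: (A0 :|: B0)|.
Proof.
move=> A1 B1; apply: leq_trans card_vals_separator.
have n9' : 9 <= #|'I_n| by rewrite card_ord.
have := card_separator_gt n9' (vals_triples A0) (vals_triples B0) vals_disjoint vals_cross.
by rewrite card_ord; apply; rewrite card_imset //; apply: val_inj.
Qed.

End Separation.

Local Notation comps := (comps e).
Local Notation nbr_in := (nbr_in e).

Lemma outside_comp_nbr S C C' x : C \in comps S -> C' \in comps S -> C' != C ->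
  x \in C' -> x \in ~: (C :|: nbr_in S C).
Proof.
move=> CS C'S C'C xC'; rewrite !inE negb_or; apply/andP; split.
  by apply/negP => xC; have := comps_sep kneser_sym C'S CS C'C xC' xC; rewrite eqxx.
by have := subsetP (comps_subC C'S) x xC'; rewrite in_setC => /negbTE->.
Qed.

Lemma comp_nbr_separation S C : C \in comps S ->
  [disjoint C & ~: (C :|: nbr_in S C)] /\
  (forall y z, y \in C -> z \in ~: (C :|: nbr_in S C) -> ~~ e y z).
Proof.
move=> CS; split; first by rewrite disjoints_subset setCK subsetUl.
by move=> y z yC; rewrite in_setC => zN; exact: (nbr_sep kneser_sym CS yC zN).
Qed.

Lemma card_nbr_ge S C : 1 < ncomp e S -> C \in comps S -> 'C(n - 3, 3) <= #|nbr_in S C|.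
Proof.
case/card_gt1P => C1 [C2 [C1S C2S C12]] CS.
have [C' C'S C'C] : exists2 C', C' \in comps S & C' != C.
  by case: (eqVneq C1 C) => [eC1|]; [exists C2; rewrite // -eC1 eq_sym | exists C1].
have [dC noedge] := comp_nbr_separation CS.
have [x _ xC] := comps_witness CS; have [x' _ x'C'] := comps_witness C'S.
rewrite -(setC_comp_nbr CS); apply: kneser_separator_ge dC noedge _ _.
  by apply/set0Pn; exists x.
by apply/set0Pn; exists x'; apply: outside_comp_nbr C'S C'C x'C'.
Qed.

Lemma card_nbr_gt S C : 2 < ncomp e S -> C \in comps S -> 1 < #|C| ->
  'C(n - 3, 3) < #|nbr_in S C|.
Proof.
move=> S3 CS C_gt1.
have : 1 < #|comps S :\ C| by move: S3; rewrite -[ncomp e S]/#|comps S| (cardsD1 C) CS.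
case/card_gt1P => C1 [C2 []]; rewrite !inE => /andP[C1C C1S] /andP[C2C C2S] C12.
have [dC noedge] := comp_nbr_separation CS.
have [x1 _ x1C] := comps_witness C1S; have [x2 _ x2C] := comps_witness C2S.
rewrite -(setC_comp_nbr CS); apply: kneser_separator_gt dC noedge C_gt1 _.
have x1N := outside_comp_nbr CS C1S C1C x1C; have x2N := outside_comp_nbr CS C2S C2C x2C.
apply/card_gt1P; exists x1, x2; split => //.
by case/andP: (comps_sep kneser_sym C1S C2S C12 x1C x2C).
Qed.

Lemma card_adjacent_comps_le S s : s \in S ->
  #|[set C in comps S | s \in nbr_in S C]| <= 'C(n - 4, 2).
Proof.
move=> sS; set D := [set C in comps S | s \in nbr_in S C].
pose rep C := odflt s [pick y in C | e y s].
have repP C : C \in D -> rep C \in C /\ e (rep C) s.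
  rewrite !inE sS => /andP[_ /exists_inP[y yC eys]].
  by rewrite /rep; case: pickP => [y' /andP[]|/(_ y)] //; rewrite yC eys.
have DS C : C \in D -> C \in comps S by rewrite inE => /andP[].
have rep_sep C1 C2 : C1 \in D -> C2 \in D -> C1 != C2 ->
    (rep C1 != rep C2) && ~~ e (rep C1) (rep C2).
  move=> C1D C2D C12.
  exact: (comps_sep kneser_sym (DS _ C1D) (DS _ C2D) C12 (repP _ C1D).1 (repP _ C2D).1).
have cardF : #|[set val (rep C) | C in D]| = #|D|.
  apply: card_in_imset => C1 C2 C1D C2D /val_inj; apply: contra_eq.
  by move/(rep_sep _ _ C1D C2D)/andP => [].
rewrite -cardF; have -> : 'C(n - 4, 2) = 'C(#|~: val s|.-1, 2).
  by rewrite cardsCs setCK card_ord card_val; congr 'C(_, _); lia.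
apply: EKR_triples; first by rewrite cardsCs setCK card_ord card_val; lia.
  apply/subsetP => _ /imsetP[C CD ->]; rewrite in_ksets -disjoints_subset card_val eqxx andbT.
  exact: (repP _ CD).2.
move=> _ _ /imsetP[C1 C1D ->] /imsetP[C2 C2D ->].
have [<-|C12] := eqVneq C1 C2; first exact: negbT (kneser_irr _).
by case/andP: (rep_sep _ _ C1D C2D C12).
Qed.

Lemma sum_card_nbr_le S : \sum_(C in comps S) #|nbr_in S C| <= #|S| * 'C(n - 4, 2).
Proof.
have -> : \sum_(C in comps S) #|nbr_in S C| =
          \sum_(s in S) #|[set C in comps S | s \in nbr_in S C]|.
  under eq_bigr => C _ do rewrite card_sep_sum.
  rewrite exchange_big /=; apply: eq_bigr => s sS; rewrite card_sep_sum.
  by apply: eq_bigr => C _; rewrite inE sS.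
by rewrite -sum_nat_const; apply: leq_sum => s; apply: card_adjacent_comps_le.
Qed.

End KneserCuts.

Section KneserToughness.
Variable n : nat.
Hypothesis n9 : 9 <= n.
Local Notation V := (kvert n 3).
Local Notation e := (kneser n 3).
Implicit Types (S J : {set V}) (x : V).

Lemma card_kvert : #|{: V}| = 'C(n, 3).
Proof.
rewrite card_sig -[n in 'C(n, _)]card_ord -card_draws.
by apply: eq_card => A; rewrite !inE.
Qed.

Lemma kneser_independent_card_le J : independent e J -> #|J| <= 'C(n.-1, 2).
Proof.
move=> /forall_inP iJ; rewrite -(card_imset J val_inj) -[n in n.-1]card_ord -cardsT.
apply: EKR_triples; first by rewrite cardsT card_ord; lia.
  by apply/subsetP => _ /imsetP[x _ ->]; rewrite in_ksets subsetT card_val.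
by move=> _ _ /imsetP[x xJ ->] /imsetP[y yJ ->]; have /forall_inP := iJ x xJ; apply.
Qed.

Lemma kneser_cut_ratio_ge S : vertex_cut e S -> ncomp e S * (n - 3) <= 3 * #|S|.
Proof.
move=> cutS.
have lower : ncomp e S * 'C(n - 3, 3) <= #|S| * 'C(n - 4, 2).
  apply: leq_trans (sum_card_nbr_le n9 S); rewrite -sum_nat_const.
  by apply: leq_sum => C; apply: card_nbr_ge.
have diag := mul_bin_diag_sub3 n.
have C_gt0 : 0 < 'C(n - 4, 2) by rewrite bin_gt0; lia.
by rewrite -(leq_pmul2r C_gt0) -mulnA diag mulnCA -[3 * #|S| * _]mulnA leq_pmul2l.
Qed.

Lemma kneser_tight_cut_trivial_comps S : vertex_cut e S -> 3 * #|S| = ncomp e S * (n - 3) ->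
  {in comps e S, forall C : {set V}, #|C| <= 1}.
Proof.
move=> cutS eqS C CS; rewrite leqNgt; apply/negP => C_gt1.
have diag := mul_bin_diag_sub3 n.
have S3 : 2 < ncomp e S.
  have : 'C(n - 3, 3) <= #|S|.
    apply: leq_trans (card_nbr_ge n9 cutS CS) _.
    by apply/subset_leq_card/subsetP => s; rewrite inE => /andP[].
  rewrite -(leq_pmul2l (_ : 0 < 3)) // eqS -diag mulnC leq_pmul2r; last by lia.
  by apply: leq_trans; apply: (@leq_trans 'C(5, 2)) => //; apply: leq_bin2l; lia.
have := ltn_sum_const CS (fun _ => card_nbr_ge n9 cutS) (card_nbr_gt n9 S3 CS C_gt1).
move/leq_trans/(_ (sum_card_nbr_le n9 S)); rewrite -(ltn_pmul2l (_ : 0 < 3)) //.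
by rewrite [X in X < _]mulnCA -diag [X in _ < X]mulnA eqS -!mulnA ltnn.
Qed.

Definition star (i : 'I_n) := [set x : V | i \in val x].

Lemma star_independent i : independent e (star i).
Proof.
apply/forall_inP => x; rewrite inE => xi; apply/forall_inP => y; rewrite inE => yi.
by apply/negP => /disjointP/(_ i xi yi).
Qed.

Lemma ncomp_star i : ncomp e (~: star i) = #|star i|.
Proof.
by rewrite independent_ncomp setCK //; apply: star_independent.
Qed.

Lemma card_star_ge i : 'C(n.-1, 2) <= #|star i|.
Proof.
have : #|~: star i| <= 'C(n.-1, 3).
  rewrite -(card_imset _ val_inj) -[n in n.-1]card_ord -(cardsC1 i) -card_ksets.
  apply/subset_leq_card/subsetP => _ /imsetP[x xi ->].
  rewrite in_ksets card_val eqxx andbT; apply/subsetP => j ji; rewrite !inE in xi *.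
  by apply: contraNneq xi => <-.
have := cardsC (star i); rewrite card_kvert.
have -> : 'C(n, 3) = 'C(n.-1, 3) + 'C(n.-1, 2) by rewrite -binS prednK //; lia.
lia.
Qed.

Lemma star_cut i : vertex_cut e (~: star i).
Proof.
rewrite /vertex_cut ncomp_star; apply: leq_trans (card_star_ge i).
by apply: (@leq_trans 'C(8, 2)) => //; apply: leq_bin2l; lia.
Qed.

Lemma star_ratio i : 3 * #|~: star i| <= #|star i| * (n - 3).
Proof.
have := cardsC (star i); rewrite card_kvert.
have := leq_mul (card_star_ge i) (leqnn n); rewrite mulnC mul_bin_diag.
by rewrite mulnBr; nia.
Qed.

Lemma kneser_tight_cut_maximum S : vertex_cut e S -> 3 * #|S| = ncomp e S * (n - 3) ->
  maximum_independent e (~: S).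
Proof.
move=> cutS eqS.
have indS := trivial_comps_independent (@kneser_irr n) (kneser_tight_cut_trivial_comps cutS eqS).
rewrite (independent_ncomp indS) in eqS.
have cardS : #|~: S| = 'C(n.-1, 2).
  apply/eqP; rewrite -(eqn_pmul2l (_ : 0 < n)); last by lia.
  rewrite mul_bin_diag -card_kvert -(cardsC S); apply/eqP.
  have : #|~: S| * 3 <= #|~: S| * n by rewrite leq_mul2l; apply/orP; right; lia.
  by move: eqS; rewrite mulnBr; move: #|S| #|~: S|; lia.
apply/andP; split => //; apply/forallP => J; apply/implyP => /kneser_independent_card_le.
by rewrite cardS.
Qed.

End KneserToughness.

Import Order.TTheory GRing.Theory Num.Theory.
Local Open Scope ring_scope.

Lemma ler_ratio (a b c d : nat) : (0 < b)%N -> (0 < d)%N ->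
  (a%:R / b%:R <= c%:R / d%:R :> rat) = (a * d <= c * b)%N.
Proof.
by move=> b_gt0 d_gt0; rewrite ler_pdivrMr ?ltr0n // mulrAC ler_pdivlMr ?ltr0n // -!natrM ler_nat.
Qed.

Lemma eqr_ratio (a b c d : nat) : (0 < b)%N -> (0 < d)%N ->
  (a%:R / b%:R == c%:R / d%:R :> rat) = (a * d == c * b)%N.
Proof. by move=> b_gt0 d_gt0; rewrite eqr_div ?pnatr_eq0 -?lt0n // -!natrM eqr_nat. Qed.

Lemma ratio_n3 (n : nat) : (3 <= n)%N -> n%:R / 3 - 1 = (n - 3)%:R / 3%:R :> rat.
Proof. by move=> n3; rewrite natrB // mulrBl divff. Qed.

Theorem theorem4p1 (n : nat) (hn : (9 <= n)%N) :
  toughness (kneser n 3) = n%:R / 3 - 1 /\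
  (forall S : {set kvert n 3},
      vertex_cut (kneser n 3) S ->
      (#|S|%:R / (ncomp (kneser n 3) S)%:R : rat) = n%:R / 3 - 1 ->
      exists I : {set kvert n 3},
        maximum_independent (kneser n 3) I /\ S = ~: I).
Proof.
have i0 : 'I_n by exists 0; lia.
rewrite ratio_n3; last by lia.
have ncomp_gt0 S : vertex_cut (kneser n 3) S -> (0 < ncomp (kneser n 3) S)%N by apply: ltnW.
split.
  apply/le_anti/andP; split.
    apply: bigmin_inf (star_cut hn i0) _; rewrite ler_ratio ?ncomp_gt0 ?star_cut //.
    by rewrite ncomp_star mulnC [((n - 3) * _)%N]mulnC star_ratio.
  apply: le_bigmin => [|S cutS]; last first.
    by rewrite ler_ratio ?ncomp_gt0 // mulnC [(#|S| * 3)%N]mulnC kneser_cut_ratio_ge.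
  rewrite -[X in _ <= X]divr1 -[1]/(1%:R) ler_ratio // muln1 card_kvert mulnC -mul_bin_diag.
  by apply: leq_trans (leq_subr 3 n) (leq_pmulr _ _); rewrite bin_gt0; lia.
move=> S cutS /eqP; rewrite eqr_ratio ?ncomp_gt0 // => /eqP eqS.
exists (~: S); rewrite setCK; split => //; apply: kneser_tight_cut_maximum => //.
by rewrite mulnC eqS mulnC.
Qed.
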